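(* Let $\kappa\ge 2$, let $\psi^+$ be a rooted binary topological tree on a taxon set $X$, and let $a,b,c,d\in X$ be distinct taxa such that the unrooted topology of $\psi^+|_{\{a,b,c,d\}}$ is the quartet $ab|cd$. For $P\in\mathrm{UE}_\kappa(\psi^+)$ let $\tilde P=P_{\{a,b,c,d\}}$. Then for all $P\in\mathrm{UE}_\kappa(\psi^+)$, $\operatorname{Flat}_{ab|cd}(\tilde P)$ has rank at most $\binom{\kappa+1}{2}$, while for generic $P\in\mathrm{UE}_\kappa(\psi^+)$ both $\operatorname{Flat}_{ac|bd}(\tilde P)$ and $\operatorname{Flat}_{ad|bc}(\tilde P)$ have rank $\kappa^2$.
   Context: A $\kappa$-state site pattern probability tensor on a finite taxon set $X$ is an $|X|$-way $\kappa\times\cdots\times\kappa$ real array with one index per taxon, non-negative entries summing to 1. $P_Y$ denotes marginalization to taxa $Y\subseteq X$; $\psi^+|_Y$ is the induced rooted subtree. A 2-clade of a rooted tree is a pair of leaves that are exactly the leaf descendants of some vertex. $\mathrm{UE}_\kappa(\psi^+)$ is the set of all such tensors $P$ such that for every $Y\subseteq X$ and every 2-clade $\{a,b\}$ of $\psi^+|_Y$, $P_Y$ is invariant under exchanging the $a$ and $b$ indices. For a 4-way $\kappa\times\kappa\times\kappa\times\kappa$ array $\tilde P$ with indices corresponding to taxa $a,b,c,d$, the flattening $\operatorname{Flat}_{ab|cd}(\tilde P)$ is the $\kappa^2\times\kappa^2$ matrix with rows indexed by pairs $(i,j)$ of states of $a,b$, columns indexed by pairs $(k,l)$ of states of $c,d$,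 and $((i,j),(k,l))$-entry $\tilde P(i,j,k,l)$; $\operatorname{Flat}_{ac|bd}$ and $\operatorname{Flat}_{ad|bc}$ are defined analogously, with rows indexed by the states of the first pair of taxa and columns by the states of the second pair. ''Generic'' means: outside a subset of measure zero (a proper algebraic subset) of $\mathrm{UE}_\kappa(\psi^+)$. *)

From HB Require Import structures.
From mathcomp Require Import all_boot all_order all_algebra.
From mathcomp Require Import reals.
From mathcomp Require Import mpoly.
Unset Printing Implicit Defensive.
Import Order.TTheory GRing.Theory Num.Theory.
Local Open Scope ring_scope.

Inductive rtree (X : Type) : Type :=
| Leaf of X
| Node of rtree X & rtree X.
Arguments Leaf {X} _.
Arguments Node {X} _ _.

Fixpoint leaves {X : Type} (t : rtree X) : seq X :=
  match t with Leaf x => [:: x] | Node l r => leaves l ++ leaves r end.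

Definition is_tree_on {X : finType} (t : rtree X) : Prop :=
  uniq (leaves t) /\ forall x : X, x \in leaves t.

Fixpoint is_subtree {X : Type} (s t : rtree X) : Prop :=
  s = t \/ match t with
           | Leaf _ => False
           | Node l r => is_subtree s l \/ is_subtree s r
           end.

(* Induced rooted subtree t|_Y (None if Y contains no leaf): keep the
   leaves in Y and suppress the resulting degree-2 vertices. *)
Fixpoint restrict {X : finType} (Y : {set X}) (t : rtree X) : option (rtree X) :=
  match t with
  | Leaf x => if x \in Y then Some (Leaf x) else None
  | Node l r =>
      match restrict Y l, restrict Y r with
      | Some l', Some r' => Some (Node l' r')
      | Some l', None => Some l'
      | None, Some r' => Some r'
      | None, None => None
      end
  end.

Definition two_clade {X : finType} (ot : option (rtree X)) (a b : X) : Prop :=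
  match ot with
  | None => False
  | Some t => exists s, is_subtree s t /\ perm_eq (leaves s) [:: a; b]
  end.

(* The unrooted topology of t|_{a,b,c,d} is the quartet ab|cd:
   some edge (= non-root vertex cluster) separates {a,b} from {c,d}. *)
Definition displays_quartet {X : finType} (t : rtree X) (a b c d : X) : Prop :=
  match restrict [set a; b; c; d] t with
  | None => False
  | Some u => exists s, is_subtree s u /\
      (perm_eq (leaves s) [:: a; b] \/ perm_eq (leaves s) [:: c; d])
  end.

Definition tensor (R : Type) (X : finType) (k : nat) := {ffun X -> 'I_k} -> R.

(* Marginalization to Y, viewed as a function of a full assignment s that
   depends only on the states of taxa in Y. *)
Definition marg {R : realType} {X : finType} {k : nat} (Y : {set X})
  (P : tensor R X k) (s : {ffun X -> 'I_k}) : R :=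
  \sum_(t : {ffun X -> 'I_k} | [forall y in Y, t y == s y]) P t.

Definition swap_idx {X : finType} {k : nat} (s : {ffun X -> 'I_k}) (a b : X)
  : {ffun X -> 'I_k} :=
  [ffun x => if x == a then s b else if x == b then s a else s x].

Definition is_prob_tensor {R : realType} {X : finType} {k : nat} (P : tensor R X k) : Prop :=
  (forall s, 0 <= P s) /\ \sum_s P s = 1.

Definition UE {R : realType} {X : finType} (k : nat) (psi : rtree X) (P : tensor R X k) : Prop :=
  is_prob_tensor P /\
  forall (Y : {set X}) (a b : X), two_clade (restrict Y psi) a b ->
    forall s, marg Y P s = marg Y P (swap_idx s a b).

Definition marg4 {R : realType} {X : finType} {k : nat} (P : tensor R X k) (a b c d : X)
  (i j l m : 'I_k) : R :=
  \sum_(s : {ffun X -> 'I_k} | [&& s a == i, s b == j, s c == l & s d == m]) P s.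

Definition pairs (k : nat) := ('I_k * 'I_k)%type.

Definition flat {R : realType} {k : nat} (Pt : 'I_k -> 'I_k -> 'I_k -> 'I_k -> R)
  : 'M[R]_(#|{: pairs k}|) :=
  \matrix_(r, c) let: (i, j) := enum_val r in let: (l, m) := enum_val c in Pt i j l m.

Definition Flat_ab_cd {R : realType} {X : finType} {k : nat} (P : tensor R X k) (a b c d : X) :=
  flat (fun i j l m => marg4 P a b c d i j l m).
Definition Flat_ac_bd {R : realType} {X : finType} {k : nat} (P : tensor R X k) (a b c d : X) :=
  flat (fun i l j m => marg4 P a b c d i j l m).
Definition Flat_ad_bc {R : realType} {X : finType} {k : nat} (P : tensor R X k) (a b c d : X) :=
  flat (fun i m j l => marg4 P a b c d i j l m).

Definition coords {R : realType} {X : finType} {k : nat} (P : tensor R X k)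
  : 'I_#|{: {ffun X -> 'I_k}}| -> R :=
  fun i => P (enum_val i).

(* A property holds for generic P in UE_kappa(psi+): it holds outside a
   proper algebraic subset of UE, i.e. outside the zero set of some
   polynomial in the tensor entries that does not vanish on all of UE. *)
Definition generic_UE {R : realType} {X : finType} (k : nat) (psi : rtree X)
  (Q : tensor R X k -> Prop) : Prop :=
  exists f : {mpoly R[#|{: {ffun X -> 'I_k}}|]},
    (exists P, UE k psi P /\ f.@[coords P] != 0) /\
    (forall P, UE k psi P -> f.@[coords P] != 0 -> Q P).

From HB Require Import structures.
From mathcomp Require Import all_boot all_order all_algebra.
From mathcomp Require Import reals.
From mathcomp Require Import mpoly perm ring zify.
Import Order.TTheory GRing.Theory Num.Theory.
Local Open Scope ring_scope.

(* A cluster of psi|_{a,b,c,d} is {a,b} or {c,d}, i.e. one of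
   them is a 2-clade, so P~ is symmetric in its first (resp. last) two
   indices.  The rows (resp. columns) of Flat_ab|cd indexed by (i,j) and
   (j,i) then agree, leaving at most C(kappa+1,2) distinct ones.

   The product of the determinants of Flat_ac|bd and Flat_ad|bc
   is a polynomial in the entries of P, so it suffices to find one P in UE
   where it does not vanish.  Take a cluster V of psi containing exactly two
   of a, b, c, d and the mixture
     P(t) ~ sum_sg sum_tau w(sg,tau) [t = tau on V] prod_(z notin V) w(sg,t z)
   with w(sg,i) = 1 + [i = sg].  Clusters of a tree are laminar, so every
   2-clade of an induced subtree lies on one side of V or meets V in a
   single taxon; in both cases an explicit involution of assignments shows
   the required exchange symmetry.  The quartet marginal of P is
   c [i = j] S(i,l,m) with S(e,x,y) = sum_sg w(sg,e) w(sg,x) w(sg,y), and each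
   block (S(e,x,y))_(x,y) is positive definite, so both flattenings are
   invertible. *)

Lemma distinct4 {T : eqType} {a b c d : T} : uniq [:: a; b; c; d] ->
  ((a == b) = false) * ((a == c) = false) * ((a == d) = false) *
  ((b == c) = false) * ((b == d) = false) * ((c == d) = false) *
  ((b == a) = false) * ((c == a) = false) * ((d == a) = false) *
  ((c == b) = false) * ((d == b) = false) * ((d == c) = false).
Proof.
rewrite /= !inE !negb_or => /andP [/and3P [ab ac ad] /andP [/andP [bc bd] /andP [cd _]]].
by do ![split]; apply/negbTE; rewrite // eq_sym.
Qed.

Lemma prod_set4 {R : comNzRingType} {T : finType} (F : T -> R) {a b c d : T} :
  uniq [:: a; b; c; d] -> \prod_(z in [set a; b; c; d]) F z = F a * F b * F c * F d.
Proof.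
move=> abcd; rewrite (eq_bigl (mem [:: a; b; c; d])) => [|z]; last by rewrite !inE !orbA.
by rewrite -big_uniq //= !big_cons big_nil mulr1 !mulrA.
Qed.

Lemma sum_delta {R : nzRingType} {k : nat} (F : 'I_k -> R) j :
  \sum_i (i == j)%:R * F i = F j.
Proof.
by rewrite (bigD1 j) //= eqxx mul1r big1 ?addr0 // => i /negbTE ->; rewrite mul0r.
Qed.

Section Clusters.
Context {X : finType}.
Implicit Types (s t u v : rtree X) (Y : {set X}).

Lemma leaves_subtree s t : is_subtree s t -> {subset leaves s <= leaves t}.
Proof.
elim: t => [x|l IHl r IHr] /=; first by case=> // ->.
by case=> [->//|[/IHl sub|/IHr sub]] z /sub; rewrite mem_cat => ->; rewrite ?orbT.
Qed.

Lemma clusters_laminar {t s1 s2 z} : uniq (leaves t) ->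
  is_subtree s1 t -> is_subtree s2 t -> z \in leaves s1 -> z \in leaves s2 ->
  {subset leaves s1 <= leaves s2} \/ {subset leaves s2 <= leaves s1}.
Proof.
elim: t s1 s2 => [x|l IHl r IHr] s1 s2 uniq_t sub1 sub2.
  by case: sub1 => // ->; case: sub2 => // ->; left.
case: sub1 => [->|sub1]; first by right; apply: leaves_subtree sub2.
case: sub2 => [->|sub2]; first by left; apply: leaves_subtree; right.
move: uniq_t; rewrite /= cat_uniq => /and3P [uniq_l disj uniq_r].
have apart y : y \in leaves l -> y \in leaves r -> False.
  by move=> yl yr; move/hasPn: disj => /(_ y yr); rewrite yl.
case: sub1 => sub1; case: sub2 => sub2 z1 z2.
- exact: IHl sub1 sub2 z1 z2.
- by case: (apart z); [apply: leaves_subtree sub1 _ z1 | apply: leaves_subtree sub2 _ z2].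
- by case: (apart z); [apply: leaves_subtree sub2 _ z2 | apply: leaves_subtree sub1 _ z1].
- exact: IHr sub1 sub2 z1 z2.
Qed.

Definition oleaves (o : option (rtree X)) : seq X :=
  if o is Some u then leaves u else [::].

Lemma restrict_leaves Y t : oleaves (restrict Y t) = [seq z <- leaves t | z \in Y].
Proof.
elim: t => [x|l IHl r IHr] /=; first by case: (x \in Y).
rewrite filter_cat -IHl -IHr.
by case: (restrict Y l) => [?|]; case: (restrict Y r) => [?|] //=; rewrite cats0.
Qed.

Lemma subtree_restrict {Y t u s} : restrict Y t = Some u -> is_subtree s u ->
  exists s0, is_subtree s0 t /\ leaves s = [seq z <- leaves s0 | z \in Y].
Proof.
elim: t u s => [x|l IHl r IHr] u s /=.
  by case: ifP => // xY [<-] [->|//]; exists (Leaf x); split; [left | rewrite /= xY].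
have Hl := restrict_leaves Y l; have Hr := restrict_leaves Y r.
case El: (restrict Y l) => [l'|]; case Er: (restrict Y r) => [r'|] //.
- case=> <- [->|[sub|sub]].
  + exists (Node l r); split; first by left.
    by rewrite /= filter_cat -Hl -Hr El Er.
  + by have [s0 [sub0 E]] := IHl _ _ El sub; exists s0; split=> //; right; left.
  + by have [s0 [sub0 E]] := IHr _ _ Er sub; exists s0; split=> //; right; right.
- case=> <- sub; have [s0 [sub0 E]] := IHl _ _ El sub.
  by exists s0; split=> //; right; left.
- case=> <- sub; have [s0 [sub0 E]] := IHr _ _ Er sub.
  by exists s0; split=> //; right; right.
Qed.

Lemma two_clade_cluster Y t x y : two_clade (restrict Y t) x y ->
  exists s0, is_subtree s0 t /\
    forall z, (z \in Y) && (z \in leaves s0) = (z \in [:: x; y]).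
Proof.
rewrite /two_clade; case E: (restrict Y t) => [u|] // [s [sub_s perm_s]].
have [s0 [sub_s0 Es]] := subtree_restrict E sub_s.
by exists s0; split=> // z; rewrite -(perm_mem perm_s) Es mem_filter.
Qed.

Lemma quartet_cluster t a b c d : uniq [:: a; b; c; d] -> displays_quartet t a b c d ->
  exists s0, is_subtree s0 t /\
   ([/\ a \in leaves s0, b \in leaves s0, c \notin leaves s0 & d \notin leaves s0] \/
    [/\ c \in leaves s0, d \in leaves s0, a \notin leaves s0 & b \notin leaves s0]).
Proof.
move=> abcd; rewrite /displays_quartet; case E: (restrict _ t) => [u|] // [s [sub_s perm_s]].
have [s0 [sub_s0 Es]] := subtree_restrict E sub_s.
exists s0; split => //.
have mem p q : perm_eq (leaves s) [:: p; q] -> forall z,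
    (z \in [set a; b; c; d]) && (z \in leaves s0) = (z \in [:: p; q]).
  by move=> pq z; rewrite -(perm_mem pq) Es mem_filter.
case: perm_s => /mem Hz; [left | right];
  have := Hz a; have := Hz b; have := Hz c; have := Hz d;
  by rewrite !inE !eqxx ?orbT !(distinct4 abcd) /= => -> -> -> ->.
Qed.

Lemma cluster_meets_clade {t v w Y x y} :
  uniq (leaves t) -> is_subtree v t -> is_subtree w t ->
  x \in leaves v -> y \notin leaves v -> x \in leaves w -> y \in leaves w ->
  (forall z, (z \in Y) && (z \in leaves w) = (z \in [:: x; y])) ->
  forall z, z \in leaves v -> z \in Y -> z = x.
Proof.
move=> uniq_t sub_v sub_w xv yv xw yw clade z zv zY.
case: (clusters_laminar uniq_t sub_v sub_w xv xw) => vw; last by rewrite (vw _ yw) in yv.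
have := clade z; rewrite zY vw //= !inE => /esym /orP [] /eqP // zy.
by rewrite -zy zv in yv.
Qed.

End Clusters.

Section Marginals.
Context {R : realType} {X : finType} {k : nat}.
Implicit Types (P : tensor R X k) (Y : {set X}) (s t : {ffun X -> 'I_k}).

Lemma marg4_marg P a b c d s :
  marg4 P a b c d (s a) (s b) (s c) (s d) = marg [set a; b; c; d] P s.
Proof.
apply: eq_bigl => t; apply/and4P/forall_inP => [[/eqP ta /eqP tb /eqP tc /eqP td] z|eq_ts].
  by rewrite !inE => /orP [/orP [/orP [|] |] |] /eqP ->; apply/eqP.
by split; apply: eq_ts; rewrite !inE eqxx ?orbT.
Qed.

Lemma marg4_pairC P a b c d i j l m :
  marg4 P a b c d i j l m = marg4 P c d a b l m i j.
Proof. by apply: eq_bigl => t; apply/and4P/and4P => -[*]. Qed.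

Definition assign4 (a b c d : X) (i j l m : 'I_k) : {ffun X -> 'I_k} :=
  [ffun z => if z == a then i else if z == b then j else if z == c then l else m].

Lemma assign4E {a b c d : X} (i j l m : 'I_k) : uniq [:: a; b; c; d] ->
  let s := assign4 a b c d i j l m in [/\ s a = i, s b = j, s c = l & s d = m].
Proof. by move=> abcd s; rewrite /s /assign4 !ffunE !(distinct4 abcd) !eqxx. Qed.

Lemma marg_prod (h : X -> 'I_k -> R) Y s :
  \sum_(t : {ffun X -> 'I_k} | [forall y in Y, t y == s y]) \prod_z h z (t z) =
  \prod_(z in Y) h z (s z) * \prod_(z in ~: Y) \sum_i h z i.
Proof.
pose F z : pred 'I_k := if z \in Y then pred1 (s z) else predT.
rewrite (eq_bigl (mem (family F))) => [|t]; last first.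
  apply/forall_inP/familyP => [eq_ts z|inF z zY]; rewrite /F.
    by case: ifP => // zY; rewrite inE eq_ts.
  by have := inF z; rewrite /F zY.
rewrite -bigA_distr_big_dep (bigID (mem Y)) /=; congr (_ * _).
  by apply: eq_bigr => z zY; rewrite /F zY big_pred1_eq.
by apply: eq_big => [z|z /negbTE zY]; rewrite ?inE // /F zY.
Qed.

Lemma swap_idx_tperm s (x y : X) :
  swap_idx s x y = [ffun z => s (tperm x y z)].
Proof.
apply/ffunP => z; rewrite !ffunE.
case: tpermP => [->|->|/eqP zx /eqP zy]; rewrite ?eqxx ?(negbTE zx) ?(negbTE zy) //.
by case: eqP => // ->.
Qed.

Lemma swap_idxC s (x y : X) :
  swap_idx s x y = swap_idx s y x.
Proof. by rewrite !swap_idx_tperm tpermC. Qed.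

Lemma marg_involution P Y (f : {ffun X -> 'I_k} -> {ffun X -> 'I_k}) s s' :
  involutive f -> (forall t, P (f t) = P t) ->
  (forall t, [forall y in Y, f t y == s' y] = [forall y in Y, t y == s y]) ->
  marg Y P s' = marg Y P s.
Proof.
move=> fK Pf fibre; rewrite /marg (reindex_inj (inv_inj fK)) /=.
by apply: eq_big => t; [exact: fibre | rewrite Pf].
Qed.

Lemma marg4_clade_sym {psi : rtree X} {P : tensor R X k} {a b c d : X} {i j l m : 'I_k} :
  UE k psi P -> uniq [:: a; b; c; d] ->
  two_clade (restrict [set a; b; c; d] psi) a b ->
  marg4 P a b c d i j l m = marg4 P a b c d j i l m.
Proof.
move=> [_ exch] abcd clade.
have [sa sb sc sd] := assign4E i j l m abcd; set s := assign4 _ _ _ _ _ _ _ _ in sa sb sc sd.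
have [wa wb wc wd] : [/\ swap_idx s a b a = j, swap_idx s a b b = i,
    swap_idx s a b c = l & swap_idx s a b d = m].
  by rewrite !ffunE !(distinct4 abcd) !eqxx.
rewrite -{1}sa -{1}sb -{1}sc -{1}sd marg4_marg (exch _ _ _ clade) -marg4_marg.
by rewrite wa wb wc wd.
Qed.

End Marginals.

Section RankBound.
Context {R : realType} {k : nat}.

Definition sorted_pairs : {set pairs k} := [set p : pairs k | (p.2 <= p.1)%N].

Lemma card_sorted_pairs : #|sorted_pairs| = 'C(k.+1, 2).
Proof.
have below (i : 'I_k) : (\sum_(j < k) (j <= i) = i.+1)%N.
  suff gen n : (\sum_(j < n) (j <= i) = minn n i.+1)%N by rewrite gen; apply/minn_idPr.
  by elim: n => [|n IH]; rewrite ?big_ord0 ?min0n // big_ord_recr /= IH; case: leqP; lia.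
rewrite -sum1_card (eq_bigl (fun p : pairs k => true && (p.2 <= p.1)%N)) => [|p]; last first.
  by rewrite inE.
rewrite -(pair_big_dep xpredT (fun i j : 'I_k => (j <= i)%N) (fun _ _ => 1%N)) /=.
rewrite -bin2_sum big_mkord big_ord_recl /= add0n.
apply: eq_bigr => i _; rewrite big_mkcond -[RHS]below.
by apply: eq_bigr => j _; case: ifP.
Qed.

Lemma rank_sym_rows (n : nat) (M : 'M[R]_(#|{: pairs k}|, n)) :
  (forall i j c, M (enum_rank (i, j)) c = M (enum_rank (j, i)) c) ->
  (\rank M <= 'C(k.+1, 2))%N.
Proof.
move=> symM.
pose srt (p : pairs k) : pairs k := if (p.2 <= p.1)%N then p else (p.2, p.1).
have srt_sorted p : srt p \in sorted_pairs.
  by rewrite inE /srt; case: ifP => //= /negbT; rewrite -ltnNge => /ltnW.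
have M_srt p c : M (enum_rank (srt p)) c = M (enum_rank p) c.
  by rewrite /srt; case: ifP => //; case: p => i j /= _; rewrite symM.
pose N : 'M[R]_(#|sorted_pairs|, n) := \matrix_(r, c) M (enum_rank (enum_val r)) c.
pose Sel : 'M[R]_(#|{: pairs k}|, #|sorted_pairs|) :=
  \matrix_(r, q) (enum_val q == srt (enum_val r))%:R.
have -> : M = Sel *m N.
  apply/matrixP => r c; rewrite !mxE.
  rewrite (bigD1 (enum_rank_in (srt_sorted (enum_val r)) (srt (enum_val r)))) //=.
  rewrite !mxE enum_rankK_in // eqxx mul1r M_srt enum_valK big1 ?addr0 // => q q_ne.
  rewrite !mxE; case: eqP => [Eq|_]; last by rewrite mul0r.
  by move: q_ne; rewrite -{1}(enum_valK_in (srt_sorted (enum_val r)) q) Eq eqxx.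
by rewrite (leq_trans (mxrankM_maxl _ _)) // (leq_trans (rank_leq_col _)) // card_sorted_pairs.
Qed.

(* The rank bound of the theorem: by the displayed quartet, {a,b} or {c,d}
   is a 2-clade, making the rows or the columns of Flat_ab|cd symmetric. *)
Lemma flat_ab_cd_rank {X : finType} (psi : rtree X) (P : tensor R X k) a b c d :
  UE k psi P -> uniq [:: a; b; c; d] -> displays_quartet psi a b c d ->
  (\rank (Flat_ab_cd P a b c d) <= 'C(k.+1, 2))%N.
Proof.
move=> UEP abcd; rewrite /displays_quartet.
case E: (restrict _ psi) => [u|] // [s [sub_s [perm_ab|perm_cd]]].
  have clade : two_clade (restrict [set a; b; c; d] psi) a b by rewrite E; exists s.
  apply: rank_sym_rows => i j col; rewrite /Flat_ab_cd /flat !mxE !enum_rankK.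
  by case: (enum_val col) => l m; apply: marg4_clade_sym UEP abcd clade.
have cdab : uniq [:: c; d; a; b].
  by rewrite (perm_uniq (permEl (perm_catC [:: c; d] [:: a; b]))).
have clade : two_clade (restrict [set c; d; a; b] psi) c d.
  have -> : [set c; d; a; b] = [set a; b; c; d].
    by apply/setP => z; rewrite !inE; do !case: eqP.
  by rewrite E; exists s.
rewrite -mxrank_tr; apply: rank_sym_rows => l m row; rewrite /Flat_ab_cd /flat !mxE !enum_rankK.
case: (enum_val row) => i j.
by rewrite marg4_pairC (marg4_clade_sym UEP cdab clade) -marg4_pairC.
Qed.

End RankBound.

Section Weights.
Context {R : realType} {k : nat}.
Implicit Types (sg e i x y : 'I_k).

Definition w sg i : R := 1 + (i == sg)%:R.

Lemma w_gt0 sg i : 0 < w sg i.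
Proof. by rewrite ltr_wpDr ?ler0n ?ltr01. Qed.

Definition triple_moment e x y : R := \sum_sg w sg e * w sg x * w sg y.

Lemma triple_momentC e x y : triple_moment e x y = triple_moment e y x.
Proof. by apply: eq_bigr => sg _; rewrite mulrAC. Qed.

(* For each e the matrix (triple_moment e x y)_(x,y) is positive definite;
   we only need that it has trivial kernel. *)
Lemma triple_moment_definite e (u : 'I_k -> R) :
  (forall y, \sum_x u x * triple_moment e x y = 0) -> forall x, u x = 0.
Proof.
move=> ker_u.
have quad0 : \sum_sg w sg e * (\sum_x u x * w sg x) ^+ 2 = 0.
  transitivity (\sum_y u y * (\sum_x u x * triple_moment e x y)); last first.
    by apply: big1 => y _; rewrite ker_u mulr0.
  rewrite [RHS](eq_bigr (fun y => \sum_x \sum_sg u y * (u x * (w sg e * w sg x * w sg y))))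
    => [|y _]; last by rewrite mulr_sumr; apply: eq_bigr => x _; rewrite !mulr_sumr.
  rewrite [RHS]exchange_big /=; under [RHS]eq_bigr do rewrite exchange_big /=.
  rewrite [RHS]exchange_big /=; apply: eq_bigr => sg _.
  rewrite expr2 mulr_suml mulr_sumr; apply: eq_bigr => x _.
  by rewrite !mulr_sumr; apply: eq_bigr => y _; ring.
have proj0 sg : \sum_x u x * w sg x = 0.
  have terms_ge0 i : true -> 0 <= w i e * (\sum_x u x * w i x) ^+ 2.
    by move=> _; rewrite mulr_ge0 ?sqr_ge0 // ltW ?w_gt0.
  have /eqP := psumr_eq0P terms_ge0 quad0 (i := sg) isT.
  by rewrite mulf_eq0 sqrf_eq0 gt_eqF ?w_gt0 //= => /eqP.
have proj sg : \sum_x u x * w sg x = \sum_x u x + u sg.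
  rewrite -(sum_delta u sg) -big_split /=.
  by apply: eq_bigr => x _; rewrite /w mulrDr mulr1 mulrC.
have sum0 : \sum_x u x = 0.
  have : \sum_sg (\sum_x u x + u sg) = 0 by apply: big1 => sg _; rewrite -proj.
  rewrite big_split /= sumr_const card_ord -mulr_natl -[X in _ + X]mul1r -mulrDl.
  by move/eqP; rewrite mulf_eq0 paddr_eq0 ?ler0n ?ler01 // oner_eq0 andbF => /eqP.
by move=> x; have := proj0 x; rewrite proj sum0 add0r.
Qed.

Lemma block_moment_det (M : 'M[R]_(#|{: pairs k}|)) (f : pairs k -> pairs k) (c : R) :
  c != 0 -> bijective f ->
  (forall p p', M (enum_rank p) (enum_rank p') =
     c * ((f p).1 == (f p').1)%:R * triple_moment (f p).1 (f p).2 (f p').2) ->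
  \det M != 0.
Proof.
move=> c_neq0 [g fK gK] M_block; apply/det0P => -[v /negP v_neq0 vM]; apply: v_neq0.
pose u e x := v 0 (enum_rank (g (e, x))).
suff u0 e : forall x, u e x = 0.
  apply/eqP/rowP => r; rewrite mxE -(enum_valK r) -(fK (enum_val r)).
  by case: (f (enum_val r)) => e x; apply: u0.
apply: (triple_moment_definite e (u e)) => y.
(* Entry g(e,y) of v *m M = 0 only involves the block e. *)
have /rowP /(_ (enum_rank (g (e, y)))) := vM; rewrite !mxE.
pose entry e' x' := u e' x' * M (enum_rank (g (e', x'))) (enum_rank (g (e, y))).
rewrite (reindex (fun pq => enum_rank (g pq))) /=; last first.
  by exists (fun r => f (enum_val r)) => [pq _|r _]; rewrite ?enum_rankK ?gK // fK enum_valK.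
rewrite (eq_bigr (fun pq => entry pq.1 pq.2)) => [|[] //]; rewrite -(pair_bigA _ entry) /=.
rewrite (bigD1 e) //= [X in _ + X]big1 ?addr0 => [|e' /negbTE e'e]; last first.
  by apply: big1 => x _; rewrite /entry M_block !gK /= e'e mulr0 mul0r mulr0.
under eq_bigr => x _ do rewrite /entry M_block !gK /= eqxx mulr1 mulrCA.
by rewrite -mulr_sumr => /eqP; rewrite mulf_eq0 (negbTE c_neq0) => /eqP.
Qed.

End Weights.

(* The witness tensor for a cluster V: a root state sg; the whole cluster V
   takes a common state tau, drawn with weight w sg tau; every other taxon
   independently takes a state i with weight w sg i. *)
Section Witness.
Variables (R : realType) (X : finType) (k : nat) (V : {set X}).
Implicit Types (s t : {ffun X -> 'I_k}) (sg tau i : 'I_k).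

Definition leaf_weight sg tau (z : X) i : R :=
  if z \in V then (i == tau)%:R else w sg i.

Definition cluster_weight t : R :=
  \sum_sg \sum_tau w sg tau * \prod_z leaf_weight sg tau z (t z).

Definition total_weight : R := \sum_t cluster_weight t.

Definition cluster_tensor : tensor R X k := fun t => cluster_weight t / total_weight.

Lemma leaf_weight_ge0 sg tau z i : 0 <= leaf_weight sg tau z i.
Proof. by rewrite /leaf_weight; case: (z \in V); rewrite ?ler0n ?ltW ?w_gt0. Qed.

Lemma cluster_weight_term_ge0 sg tau t :
  0 <= w sg tau * \prod_z leaf_weight sg tau z (t z).
Proof.
apply: mulr_ge0; first exact/ltW/w_gt0.
by apply: prodr_ge0 => z _; apply: leaf_weight_ge0.
Qed.

Lemma cluster_weight_ge0 t : 0 <= cluster_weight t.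
Proof.
by apply: sumr_ge0 => sg _; apply: sumr_ge0 => tau _; apply: cluster_weight_term_ge0.
Qed.

(* The total weight is positive: constant assignments have positive weight. *)
Lemma total_weight_gt0 : (0 < k)%N -> 0 < total_weight.
Proof.
move=> k_gt0; pose i0 := Ordinal k_gt0; pose t0 : {ffun X -> 'I_k} := [ffun=> i0].
have weight_t0 : 0 < cluster_weight t0.
  rewrite /cluster_weight (bigD1 i0) // ltr_wpDr ?sumr_ge0 // => [sg _|].
    by apply: sumr_ge0 => tau _; apply: cluster_weight_term_ge0.
  rewrite (bigD1 i0) //= ltr_wpDr ?sumr_ge0 // => [tau _|]; first exact: cluster_weight_term_ge0.
  rewrite mulr_gt0 ?w_gt0 // prodr_gt0 // => z _.
  by rewrite /leaf_weight ffunE eqxx; case: (z \in V); rewrite ?ltr01 ?w_gt0.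
by rewrite /total_weight (bigD1 t0) //= ltr_wpDr ?sumr_ge0 // => t _; apply: cluster_weight_ge0.
Qed.

Lemma prod_leaf_weight sg tau t : \prod_z leaf_weight sg tau z (t z) =
  ([forall z in V, t z == tau])%:R * \prod_(z | z \notin V) w sg (t z).
Proof.
rewrite (bigID (mem V)) /=; congr (_ * _); last first.
  by apply: eq_bigr => z /negbTE zV; rewrite /leaf_weight zV.
have [const|] := boolP [forall z in V, t z == tau].
  by apply: big1 => z zV; rewrite /leaf_weight zV (eqP (forall_inP const z zV)) eqxx.
case/forall_inPn => z zV /negbTE tz; rewrite (bigD1 z) //=.
by rewrite /leaf_weight zV tz mul0r.
Qed.

Lemma cluster_weight_constant x0 t : x0 \in V ->
  cluster_weight t = if [forall z in V, t z == t x0] then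
    \sum_sg w sg (t x0) * \prod_(z | z \notin V) w sg (t z) else 0.
Proof.
move=> x0V; rewrite /cluster_weight; case: ifP => const.
  apply: eq_bigr => sg _.
  rewrite -(sum_delta (fun tau => w sg tau * \prod_(z | z \notin V) w sg (t z))).
  apply: eq_bigr => tau _.
  rewrite prod_leaf_weight mulrCA; congr (_ * _); congr ((nat_of_bool _)%:R).
  apply/forall_inP/eqP => [/(_ x0 x0V) /eqP -> // | ->]; exact/forall_inP.
apply: big1 => sg _; apply: big1 => tau _; rewrite prod_leaf_weight.
have [tau_const|] := boolP [forall z in V, t z == tau]; last by rewrite mul0r mulr0.
move/negbT: const => /forall_inPn [z zV]; move/forall_inP: tau_const => tau_const.
by rewrite (eqP (tau_const z zV)) (eqP (tau_const x0 x0V)) eqxx.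
Qed.

Lemma cluster_weight_perm (g : {perm X}) t : (forall z, (g z \in V) = (z \in V)) ->
  cluster_weight [ffun z => t (g z)] = cluster_weight t.
Proof.
move=> gV; apply: eq_bigr => sg _; apply: eq_bigr => tau _; congr (_ * _).
rewrite [RHS](reindex_inj (@perm_inj _ g)) /=.
by apply: eq_bigr => z _; rewrite ffunE /leaf_weight gV.
Qed.

Definition cluster_exchange x y t : {ffun X -> 'I_k} :=
  [ffun z => if z \in V then tperm (t x) (t y) (t z) else if z == y then t x else t z].

Lemma cluster_exchange_at_x x y t : x \in V -> cluster_exchange x y t x = t y.
Proof. by move=> xV; rewrite ffunE xV tpermL. Qed.

Lemma cluster_exchange_at_y x y t : y \notin V -> cluster_exchange x y t y = t x.
Proof. by move=> yV; rewrite ffunE (negbTE yV) eqxx. Qed.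

Lemma cluster_exchangeK x y : x \in V -> y \notin V -> involutive (cluster_exchange x y).
Proof.
move=> xV yV t; apply/ffunP => z.
rewrite [in LHS]ffunE cluster_exchange_at_x ?cluster_exchange_at_y //.
case: ifP => zV; first by rewrite ffunE zV tpermC tpermK.
by case: eqVneq => [->|zy] //; rewrite ffunE zV (negbTE zy).
Qed.

(* The cluster exchange keeps assignments constant on V and only exchanges
   the common state of V with the state of y, so it preserves the weight. *)
Lemma cluster_weight_exchange x y t : x \in V -> y \notin V ->
  cluster_weight (cluster_exchange x y t) = cluster_weight t.
Proof.
move=> xV yV; rewrite (cluster_weight_constant x _ xV) (cluster_weight_constant x t xV).
rewrite cluster_exchange_at_x //.
have -> : [forall z in V, cluster_exchange x y t z == t y] = [forall z in V, t z == t x].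
  apply: eq_forallb_in => z zV.
  by rewrite ffunE zV -{2}(tpermL (t x) (t y)) (inj_eq perm_inj).
case: ifP => // _; apply: eq_bigr => sg _.
rewrite (bigD1 y) // [in RHS](bigD1 y) //= cluster_exchange_at_y // mulrCA.
congr (_ * (_ * _)).
by apply: eq_bigr => z /andP [/negbTE zV /negbTE zy]; rewrite ffunE zV zy.
Qed.

Lemma cluster_tensor_ge0 t : 0 <= cluster_tensor t.
Proof.
by rewrite divr_ge0 ?cluster_weight_ge0 ?sumr_ge0 // => t' _; apply: cluster_weight_ge0.
Qed.

Lemma cluster_tensor_sum1 : (0 < k)%N -> \sum_t cluster_tensor t = 1.
Proof. by move=> k_gt0; rewrite -mulr_suml mulfV // gt_eqF ?total_weight_gt0. Qed.

Lemma marg_swap_same_side (Y : {set X}) s x y : x \in Y -> y \in Y ->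
  (x \in V) = (y \in V) ->
  marg Y cluster_tensor (swap_idx s x y) = marg Y cluster_tensor s.
Proof.
move=> xY yY same_side.
have gY z : z \in Y -> tperm x y z \in Y by case: tpermP.
apply: (marg_involution cluster_tensor Y (fun t => swap_idx t x y)).
- by move=> t; apply/ffunP => z; rewrite !swap_idx_tperm !ffunE tpermK.
- move=> t; rewrite /cluster_tensor swap_idx_tperm cluster_weight_perm // => z.
  by case: tpermP => [->|->|].
- move=> t; rewrite !swap_idx_tperm; apply/forall_inP/forall_inP => eq_ts z zY.
    by have := eq_ts _ (gY z zY); rewrite !ffunE tpermK.
  by rewrite !ffunE; apply/eq_ts/gY.
Qed.

Lemma marg_swap_across (Y : {set X}) s x y :
  x \in Y -> y \in Y -> x \in V -> y \notin V ->
  (forall z, z \in V -> z \in Y -> z = x) ->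
  marg Y cluster_tensor (swap_idx s x y) = marg Y cluster_tensor s.
Proof.
move=> xY yY xV yV VY.
apply: (marg_involution cluster_tensor Y (cluster_exchange x y)); first exact: cluster_exchangeK.
  by move=> t; rewrite /cluster_tensor cluster_weight_exchange.
move=> t; rewrite swap_idx_tperm.
have fixed z : z \in Y -> z != x -> z != y ->
    cluster_exchange x y t z = t z /\ tperm x y z = z.
  move=> zY zx zy; have zV : z \notin V by apply: contra zx => zV; rewrite (VY z zV zY).
  by rewrite ffunE (negbTE zV) (negbTE zy) tpermD // eq_sym.
have ex := cluster_exchange_at_x x y t xV; have ey := cluster_exchange_at_y x y t yV.
apply/forall_inP/forall_inP => eq_ts z zY.
- have [->|zx] := eqVneq z x; first by have := eq_ts y yY; rewrite ffunE tpermR ey.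
  have [->|zy] := eqVneq z y; first by have := eq_ts x xY; rewrite ffunE tpermL ex.
  by have := eq_ts z zY; rewrite ffunE; case: (fixed z zY zx zy) => -> ->.
- rewrite [X in _ == X]ffunE.
  have [->|zx] := eqVneq z x; first by rewrite tpermL ex; apply: eq_ts.
  have [->|zy] := eqVneq z y; first by rewrite tpermR ey; apply: eq_ts.
  by case: (fixed z zY zx zy) => -> ->; apply: eq_ts.
Qed.

(* If V is (the leaf set of) a cluster of psi, the witness lies in UE:
   a 2-clade {x,y} of psi|_Y either lies on one side of V, or V meets Y
   only in one of x, y. *)
Lemma cluster_tensor_UE (psi v : rtree X) :
  (0 < k)%N -> uniq (leaves psi) -> is_subtree v psi ->
  (forall z, (z \in V) = (z \in leaves v)) -> UE k psi cluster_tensor.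
Proof.
move=> k_gt0 uniq_psi sub_v Vv.
split; first by split; [exact: cluster_tensor_ge0 | exact: cluster_tensor_sum1].
move=> Y x y /two_clade_cluster [w0 [sub_w trace]] s.
have across p q : p \in V -> q \notin V ->
    (forall z, (z \in Y) && (z \in leaves w0) = (z \in [:: p; q])) ->
    marg Y cluster_tensor s = marg Y cluster_tensor (swap_idx s p q).
  move=> pV qV trace_pq.
  have [pY pw] : p \in Y /\ p \in leaves w0 by apply/andP; rewrite trace_pq !inE eqxx.
  have [qY qw] : q \in Y /\ q \in leaves w0 by apply/andP; rewrite trace_pq !inE eqxx orbT.
  symmetry; apply: marg_swap_across => // z; move: pV qV; rewrite !Vv => pV qV.
  exact: cluster_meets_clade uniq_psi sub_v sub_w pV qV pw qw trace_pq z.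
have [xY _] : x \in Y /\ x \in leaves w0 by apply/andP; rewrite trace !inE eqxx.
have [yY _] : y \in Y /\ y \in leaves w0 by apply/andP; rewrite trace !inE eqxx orbT.
have [xV|xV] := boolP (x \in V); have [yV|yV] := boolP (y \in V).
- by rewrite marg_swap_same_side // xV yV.
- exact: across.
- by rewrite swap_idxC; apply: across => // z; rewrite trace !inE orbC.
- by rewrite marg_swap_same_side // (negbTE xV) (negbTE yV).
Qed.

Definition leaf_mass (z : X) : R := if z \in V then 1 else k%:R + 1.

Lemma sum_leaf_weight sg tau z : \sum_i leaf_weight sg tau z i = leaf_mass z.
Proof.
rewrite /leaf_weight /leaf_mass; case: (z \in V).
  by rewrite -[RHS](sum_delta (fun _ => 1) tau); apply: eq_bigr => i _; rewrite mulr1.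
rewrite big_split /= sumr_const card_ord; congr (_ + _).
by rewrite -[RHS](sum_delta (fun _ => 1) sg); apply: eq_bigr => i _; rewrite mulr1.
Qed.

Lemma leaf_mass_gt0 z : 0 < leaf_mass z.
Proof. by rewrite /leaf_mass; case: (z \in V); rewrite ?ltr01 ?ltr_wpDl ?ler0n ?ltr01. Qed.

Lemma marg_cluster_weight (Y : {set X}) s :
  marg Y cluster_weight s =
  \sum_sg \sum_tau w sg tau * \prod_(z in Y) leaf_weight sg tau z (s z) *
    \prod_(z in ~: Y) leaf_mass z.
Proof.
rewrite /marg /cluster_weight exchange_big; apply: eq_bigr => sg _.
rewrite exchange_big; apply: eq_bigr => tau _.
rewrite -mulr_sumr marg_prod mulrA; congr (_ * _).
by apply: eq_bigr => z _; rewrite sum_leaf_weight.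
Qed.

Lemma marg4_cluster_tensor a b c d i j l m : uniq [:: a; b; c; d] ->
  a \in V -> b \in V -> c \notin V -> d \notin V ->
  marg4 cluster_tensor a b c d i j l m =
  (\prod_(z in ~: [set a; b; c; d]) leaf_mass z) / total_weight *
    (i == j)%:R * triple_moment i l m.
Proof.
move=> abcd aV bV cV dV; have [sa sb sc sd] := assign4E i j l m abcd.
set s := assign4 _ _ _ _ _ _ _ _ in sa sb sc sd.
rewrite -{1}sa -{1}sb -{1}sc -{1}sd marg4_marg /marg /cluster_tensor -mulr_suml.
rewrite -/(marg _ cluster_weight _) marg_cluster_weight.
rewrite mulr_suml /triple_moment mulr_sumr; apply: eq_bigr => sg _.
have on_quartet tau : \prod_(z in [set a; b; c; d]) leaf_weight sg tau z (s z) =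
    (i == tau)%:R * (j == tau)%:R * w sg l * w sg m.
  by rewrite prod_set4 // sa sb sc sd /leaf_weight aV bV (negbTE cV) (negbTE dV).
under [X in X / _]eq_bigr => tau _ do rewrite on_quartet.
rewrite (eq_bigr (fun tau => (tau == i)%:R * ((j == tau)%:R * w sg tau * w sg l * w sg m *
  \prod_(z in ~: [set a; b; c; d]) leaf_mass z))) => [|tau _]; last by rewrite eq_sym; ring.
by rewrite sum_delta eq_sym; ring.
Qed.

End Witness.

Lemma witness_flats_invertible {R : realType} {X : finType} {k : nat} {psi : rtree X}
    {a b c d : X} : (0 < k)%N -> is_tree_on psi -> uniq [:: a; b; c; d] ->
  displays_quartet psi a b c d ->
  exists P : tensor R X k, UE k psi P /\
    \det (Flat_ac_bd P a b c d) * \det (Flat_ad_bc P a b c d) != 0.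
Proof.
move=> k_gt0 [uniq_psi _] abcd quartet.
have [v [sub_v sides]] := quartet_cluster psi a b c d abcd quartet.
pose V := [set z | z \in leaves v]; have Vv z : (z \in V) = (z \in leaves v) by rewrite inE.
exists (cluster_tensor R X k V).
split; first exact: cluster_tensor_UE k_gt0 uniq_psi sub_v Vv.
have cst_neq0 (Y : {set X}) :
    (\prod_(z in Y) leaf_mass R X k V z) / total_weight R X k V != 0.
  rewrite mulf_neq0 ?invr_eq0 ?gt_eqF ?total_weight_gt0 ?prodr_gt0 // => z _.
  exact: leaf_mass_gt0.
have id_bij : bijective (@id (pairs k)) by apply: inv_bij.
have swap_bij : bijective (fun p : pairs k => (p.2, p.1)) by apply: inv_bij => -[].
have cdab : uniq [:: c; d; a; b].
  by rewrite (perm_uniq (permEl (perm_catC [:: c; d] [:: a; b]))).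
case: sides => -[]; rewrite -!Vv => aV bV cV dV; apply: mulf_neq0.
- apply: (block_moment_det _ _ _ (cst_neq0 _) id_bij) => -[i l] [j m].
  by rewrite /Flat_ac_bd /flat mxE !enum_rankK /= marg4_cluster_tensor.
- apply: (block_moment_det _ _ _ (cst_neq0 _) id_bij) => -[i m] [j l].
  by rewrite /Flat_ad_bc /flat mxE !enum_rankK /= marg4_cluster_tensor // triple_momentC.
- apply: (block_moment_det _ _ _ (cst_neq0 _) swap_bij) => -[i l] [j m].
  by rewrite /Flat_ac_bd /flat mxE !enum_rankK /= marg4_pairC marg4_cluster_tensor.
- apply: (block_moment_det _ _ _ (cst_neq0 _) swap_bij) => -[i m] [j l].
  rewrite /Flat_ad_bc /flat mxE !enum_rankK /= marg4_pairC marg4_cluster_tensor //=.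
  by rewrite eq_sym; case: eqP => [->|_]; rewrite ?mulr0 ?mul0r.
Qed.

(* The entries of the flattenings are linear forms in the entries of P, so
   the product of the two determinants is a polynomial in the coordinates. *)
Section DeterminantPolynomial.
Variables (R : realType) (X : finType) (k : nat).
Local Notation n := #|{: {ffun X -> 'I_k}}|.

Definition poly_marg4 (a b c d : X) (i j l m : 'I_k) : {mpoly R[n]} :=
  \sum_(s : {ffun X -> 'I_k} | [&& s a == i, s b == j, s c == l & s d == m])
     'X_(enum_rank s).

Definition poly_flat (Pt : 'I_k -> 'I_k -> 'I_k -> 'I_k -> {mpoly R[n]})
  : 'M[{mpoly R[n]}]_(#|{: pairs k}|) :=
  \matrix_(r, c) let: (i, j) := enum_val r in let: (l, m) := enum_val c in Pt i j l m.

Definition flat_det_poly (a b c d : X) : {mpoly R[n]} :=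
  \det (poly_flat (fun i l j m => poly_marg4 a b c d i j l m)) *
  \det (poly_flat (fun i m j l => poly_marg4 a b c d i j l m)).

Lemma flat_det_poly_eval (P : tensor R X k) a b c d :
  (flat_det_poly a b c d).@[coords P] =
  \det (Flat_ac_bd P a b c d) * \det (Flat_ad_bc P a b c d).
Proof.
rewrite /flat_det_poly mevalM -!det_map_mx; congr (_ * _); apply: f_equal;
  apply/matrixP => row col; rewrite !mxE; case: (enum_val row) => i1 i2;
  case: (enum_val col) => j1 j2 /=; rewrite rmorph_sum; apply: eq_bigr => s _;
  by rewrite -[LHS]/(_.@[coords P]) mevalXU /coords enum_rankK.
Qed.

End DeterminantPolynomial.

Theorem theorem3p3 (R : realType) (X : finType) (k : nat) (psi : rtree X)
  (a b c d : X) :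
  (2 <= k)%N ->
  is_tree_on psi ->
  uniq [:: a; b; c; d] ->
  displays_quartet psi a b c d ->
  (forall P : tensor R X k, UE k psi P ->
     (\rank (Flat_ab_cd P a b c d) <= 'C(k.+1, 2))%N) /\
  generic_UE k psi (fun P : tensor R X k =>
     \rank (Flat_ac_bd P a b c d) = (k ^ 2)%N /\
     \rank (Flat_ad_bc P a b c d) = (k ^ 2)%N).
Proof.
move=> k_ge2 tree abcd quartet; split=> [P UEP|].
  exact: flat_ab_cd_rank UEP abcd quartet.
exists (flat_det_poly R X k a b c d); split.
  have [P [UEP dets]] := witness_flats_invertible (R := R) (ltnW k_ge2) tree abcd quartet.
  by exists P; rewrite flat_det_poly_eval.
move=> P _; rewrite flat_det_poly_eval mulf_eq0 negb_or => /andP [ac_bd ad_bc].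
have card_pairs : #|{: pairs k}| = (k ^ 2)%N by rewrite card_prod card_ord mulnn.
by split; rewrite mxrank_unit ?unitmxE ?unitfE.
Qed.
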